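(* Let $R$ be a commutative ring, $\mathrm{S}_{11}(R)$ as below, $\mathrm{B}_3(R)$ the upper triangular $3\times3$ matrices, and $M'=\mathrm{B}_3(R)/\mathrm{S}_{11}(R)$, a free $R$-module of rank $1$ generated by the class $\overline{E}_{11}$ of $E_{11}$. Then $H^0(\mathrm{S}_{11}(R),M')\cong R$ and $H^n(\mathrm{S}_{11}(R),M')=0$ for all $n>0$.
   Context: $\mathrm{S}_{11}(R)=\left\{\begin{pmatrix}a&b&c\\0&e&d\\0&0&a\end{pmatrix}\mid a,b,c,d,e\in R\right\}\subseteq\mathrm{M}_3(R)$. $M'$ is an $\mathrm{S}_{11}(R)$-bimodule via matrix multiplication (a matrix acts on $\overline{E}_{11}$ on either side by its $(1,1)$-entry). $H^n$ is Hochschild cohomology. *)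

From HB Require Import structures.
From mathcomp Require Import all_boot all_order all_algebra.
Set Implicit Arguments. Unset Strict Implicit. Unset Printing Implicit Defensive.
Import GRing.Theory.
Local Open Scope ring_scope.

Section S11.
Variable R : comRingType.

Notation i0 := (@inord 2 0).
Notation i1 := (@inord 2 1).
Notation i2 := (@inord 2 2).

Definition is_S11 (A : 'M[R]_3) : bool :=
  [&& A i1 i0 == 0, A i2 i0 == 0, A i2 i1 == 0 & A i0 i0 == A i2 i2].

(* M' = B_3(R)/S_11(R) is free of rank 1 on the class of E_11; we identify
   r * Ebar_11 with r : R.  Both actions are by the (1,1)-entry. *)
Definition lact (A : 'M[R]_3) (m : R) : R := A i0 i0 * m.
Definition ract (m : R) (A : 'M[R]_3) : R := m * A i0 i0.

(* Hochschild n-cochains: maps from n-tuples of elements of S_11(R) to M';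
   represented as functions on n-tuples of 3x3 matrices, of which only the
   values on S_11-tuples matter. *)
Definition cochain_fun (n : nat) := ('I_n -> 'M[R]_3) -> R.

Definition inS11n n (x : 'I_n -> 'M[R]_3) := forall j, is_S11 (x j).

Definition upd n (x : 'I_n -> 'M[R]_3) (i : 'I_n) (v : 'M[R]_3) :=
  fun j => if j == i then v else x j.

Definition is_cochain n (f : cochain_fun n) : Prop :=
  forall (x : 'I_n -> 'M[R]_3) (i : 'I_n) (a b : 'M[R]_3) (r s : R),
    inS11n x -> is_S11 a -> is_S11 b ->
    f (upd x i (r *: a + s *: b)) = r * f (upd x i a) + s * f (upd x i b).

Definition hdiff n (f : cochain_fun n) : cochain_fun n.+1 :=
  fun x =>
    let xx := fun k : nat => x (inord k) in
    lact (xx 0%N) (f (fun j : 'I_n => xx j.+1))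
    + \sum_(i < n) (-1) ^+ i.+1 *
        f (fun j : 'I_n =>
             if (j < i)%N then xx j
             else if (j == i :> nat) then xx i *m xx i.+1
             else xx j.+1)
    + (-1) ^+ n.+1 * ract (f (fun j : 'I_n => xx j)) (xx n).

Definition is_cocycle n (f : cochain_fun n) : Prop :=
  is_cochain f /\ forall x, inS11n x -> hdiff f x = 0.

Definition ceq n (f g : cochain_fun n) : Prop :=
  forall x, inS11n x -> f x = g x.

Definition is_coboundary n : cochain_fun n -> Prop :=
  match n with
  | 0%N => fun f => ceq f (fun _ => 0)
  | n'.+1 => fun f => exists g : cochain_fun n', is_cochain g /\ ceq f (hdiff g)
  end.

Definition HH_vanishes n : Prop :=
  forall f : cochain_fun n, is_cocycle f -> is_coboundary f.

(* H^n(S_11(R), M') is isomorphic to R as an R-module: an R-linear map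
   phi : R -> Z^n inducing a bijection R -> Z^n / B^n. *)
Definition HH_iso_R n : Prop :=
  exists phi : R -> cochain_fun n,
    (forall r, is_cocycle (phi r)) /\
    (forall r s t x, phi (r * s + t) x = r * phi s x + phi t x) /\
    (forall r, is_coboundary (phi r) -> r = 0) /\
    (forall f, is_cocycle f -> exists r,
        is_coboundary (fun x => f x - phi r x)).

End S11.

From mathcomp Require Import all_boot all_order all_algebra.
From mathcomp Require Import ring zify.
From Stdlib Require Import FunctionalExtensionality.
Set Implicit Arguments. Unset Strict Implicit. Unset Printing Implicit Defensive.
Import GRing.Theory.
Local Open Scope ring_scope.

(* H^0: the coboundary of a 0-cochain c is x |-> chi(x) c - c chi(x) = 0, so
   Z^0 = C^0 = R and B^0 = 0.

   H^n, n > 0: an explicit contracting homotopy.  Let E = E_11 + E_33 (so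
   chi(E) = 1), delta(x) = E x - chi(x) E and tau(x) = x_12 E_22 + x_13 E_23;
   then E_12 tau(x) = delta(x) and tau(x) y = tau(x y) - chi(x) tau(y) on S.
   For an (n+1)-cocycle f, the n-cochain
       g(y_1..y_n) = f(E, y_1..y_n) - f(E_12, tau(y_1), y_2..y_n)
   satisfies dg = f when n >= 1, and for n = 0 the same identities give f = 0. *)

Section SequenceCoboundary.
Variables (R : comRingType) (A : Type) (mul : A -> A -> A) (chi : A -> R).

Implicit Types (y z : nat -> A) (F : (nat -> A) -> R).

Definition merge_at (i : nat) y : nat -> A :=
  fun k => if (k < i)%N then y k
           else if k == i then mul (y i) (y i.+1) else y k.+1.

Definition scons (s : A) y : nat -> A :=
  fun k => if k is k'.+1 then y k' else s.

Definition replace_at (i : nat) (v : A) y : nat -> A :=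
  fun k => if k == i then v else y k.

Definition insert (s : A) F : (nat -> A) -> R := fun y => F (scons s y).
Definition twist (phi : A -> A) F : (nat -> A) -> R :=
  fun y => F (scons (phi (y 0%N)) (fun k => y k.+1)).

Definition coboundary n F y : R :=
  chi (y 0%N) * F (fun k => y k.+1)
  + \sum_(i < n) (-1) ^+ i.+1 * F (merge_at i y)
  + (-1) ^+ n.+1 * (F y * chi (y n)).

(* F only reads the first n entries: F is an n-cochain *)
Definition depends_on n F :=
  forall y y', (forall k, (k < n)%N -> y k = y' k) -> F y = F y'.

Lemma coboundary_depends n F y y' : depends_on n F ->
  (forall k, (k <= n)%N -> y k = y' k) -> coboundary n F y = coboundary n F y'.
Proof.
move=> hF eq_y; rewrite /coboundary (eq_y 0%N) // (eq_y n) //.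
rewrite (hF y y'); last by move=> k hk; apply: eq_y; lia.
rewrite (hF (fun k => y k.+1) (fun k => y' k.+1)); last by move=> k hk; apply: eq_y.
congr (_ + _ + _); apply: eq_bigr => i _; congr (_ * _); apply: hF => k hk.
have hi := ltn_ord i; rewrite /merge_at.
case: ifP => _; first by apply: eq_y; lia.
by case: ifP => _; [rewrite !eq_y //; lia | apply: eq_y; lia].
Qed.

Lemma insert_depends n s F : depends_on n.+1 F -> depends_on n (insert s F).
Proof. by move=> hF y y' eq_y; apply: hF => -[|k] //= /eq_y. Qed.

Lemma twist_depends n phi F : depends_on n.+1 F -> depends_on n.+1 (twist phi F).
Proof.
by move=> hF y y' eq_y; apply: hF => -[|k] hk /=; rewrite eq_y.
Qed.

Lemma coboundaryB n F1 F2 y :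
  coboundary n (fun z => F1 z - F2 z) y = coboundary n F1 y - coboundary n F2 y.
Proof.
rewrite /coboundary.
under eq_bigr => i _ do rewrite mulrBr.
rewrite sumrB; set S1 := \sum_(i < n) _; set S2 := \sum_(i < n) _; ring.
Qed.

Lemma merge_at_succ i y :
  merge_at i.+1 y = scons (y 0%N) (merge_at i (fun k => y k.+1)).
Proof.
by apply: functional_extensionality => -[|k] //; rewrite /merge_at /= ltnS eqSS.
Qed.

Lemma merge_at0 y : merge_at 0 y = scons (mul (y 0%N) (y 1%N)) (fun k => y k.+2).
Proof. by apply: functional_extensionality => -[|k]. Qed.

Lemma replace_at_scons0 v s y : replace_at 0 v (scons s y) = scons v y.
Proof. by apply: functional_extensionality => -[|k]. Qed.

Lemma replace_at_scons_succ i v s y :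
  replace_at i.+1 v (scons s y) = scons s (replace_at i v y).
Proof.
by apply: functional_extensionality => -[|k] //; rewrite /replace_at /= eqSS.
Qed.

Lemma twist_replace_at0 phi F v y :
  twist phi F (replace_at 0 v y) =
  F (replace_at 0 (phi v) (scons (phi (y 0%N)) (fun k => y k.+1))).
Proof. by congr F; apply: functional_extensionality => -[|k]. Qed.

Lemma twist_replace_at_succ phi F i v y :
  twist phi F (replace_at i.+1 v y) =
  F (replace_at i.+1 v (scons (phi (y 0%N)) (fun k => y k.+1))).
Proof. by congr F; apply: functional_extensionality => -[|k]. Qed.

Lemma coboundary_scons n F s z :
  coboundary n.+1 F (scons s z) + coboundary n (insert s F) z =
  chi s * F z - F (scons (mul s (z 0%N)) (fun k => z k.+1))
  + chi (z 0%N) * F (scons s (fun k => z k.+1)).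
Proof.
rewrite /coboundary /insert big_ord_recl /= merge_at0.
have -> : \sum_(i < n) (-1) ^+ (lift ord0 i).+1 * F (merge_at (lift ord0 i) (scons s z))
    = - \sum_(i < n) (-1) ^+ i.+1 * F (scons s (merge_at i z)).
  rewrite -sumrN; apply: eq_bigr => i _.
  by rewrite lift0 merge_at_succ exprS mulN1r mulNr.
rewrite !exprS; ring.
Qed.

Lemma coboundary_twist m F (phi : A -> A) y :
  coboundary m.+1 (twist phi F) y =
  coboundary m.+1 F (scons (phi (y 0%N)) (fun k => y k.+1))
  + chi (y 0%N) * F (scons (phi (y 1%N)) (fun k => y k.+2))
  - F (scons (phi (mul (y 0%N) (y 1%N))) (fun k => y k.+2))
  - chi (phi (y 0%N)) * F (fun k => y k.+1)
  + F (scons (mul (phi (y 0%N)) (y 1%N)) (fun k => y k.+2)).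
Proof.
rewrite /coboundary /twist !big_ord_recl /= !merge_at0 expr1.
under eq_bigr => i _ do rewrite merge_at_succ.
under [in RHS]eq_bigr => i _ do rewrite merge_at_succ.
set S := \sum_(i < m) _; set e := (-1) ^+ m.+2; ring.
Qed.

End SequenceCoboundary.

Section S11Cohomology.
Variable R : comRingType.
Local Notation M := 'M[R]_3.
Local Notation i0 := (@inord 2 0).
Local Notation i1 := (@inord 2 1).
Local Notation i2 := (@inord 2 2).

Definition chi (A : M) : R := A i0 i0.

Local Notation dS := (coboundary (@mulmx R 3 3 3) chi).

Definition on_seq n (f : cochain_fun R n) : (nat -> M) -> R :=
  fun y => f (fun j : 'I_n => y j).

Lemma hdiff_on_seq n (f : cochain_fun R n) x :
  hdiff f x = dS n (on_seq f) (fun k => x (inord k)).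
Proof. by []. Qed.

Lemma on_seq_depends n (f : cochain_fun R n) : depends_on n (on_seq f).
Proof.
move=> y y' eq_y; rewrite /on_seq; congr f.
by apply: functional_extensionality => j; apply: eq_y.
Qed.

Lemma on_seq_inord n (f : cochain_fun R n.+1) x :
  on_seq f (fun k => x (inord k)) = f x.
Proof.
by rewrite /on_seq; congr f; apply: functional_extensionality => j; rewrite inord_val.
Qed.

Definition seq_in_S11 (y : nat -> M) := forall k, is_S11 (y k).

Definition multilinear n (F : (nat -> M) -> R) :=
  forall r s y i a b, (i < n)%N -> seq_in_S11 y -> is_S11 a -> is_S11 b ->
  F (replace_at i (r *: a + s *: b) y) =
  r * F (replace_at i a y) + s * F (replace_at i b y).

Lemma on_seq_multilinear n (f : cochain_fun R n) :
  is_cochain f -> multilinear n (on_seq f).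
Proof.
move=> hf r s y i a b hi hy ha hb.
by have := hf (fun j : 'I_n => y j) (Ordinal hi) a b r s (fun j => hy j) ha hb.
Qed.

Lemma cocycle_on_seq n (f : cochain_fun R n) y :
  is_cocycle f -> seq_in_S11 y -> dS n (on_seq f) y = 0.
Proof.
move=> [_ hf] hy; have := hf (fun j : 'I_n.+1 => y j) (fun j => hy j).
rewrite hdiff_on_seq => <-; apply: coboundary_depends; first exact: on_seq_depends.
by move=> k hk /=; rewrite inordK.
Qed.

Lemma inord_val0 : (i0 : nat) = 0%N. Proof. by rewrite inordK. Qed.
Lemma inord_val1 : (i1 : nat) = 1%N. Proof. by rewrite inordK. Qed.
Lemma inord_val2 : (i2 : nat) = 2%N. Proof. by rewrite inordK. Qed.

Lemma ord3P (i : 'I_3) : [\/ i = i0, i = i1 | i = i2].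
Proof.
case: i => -[|[|[|k]]] hk //; [apply: Or31 | apply: Or32 | apply: Or33];
  apply: val_inj; by rewrite /= ?inord_val0 ?inord_val1 ?inord_val2.
Qed.

Lemma mulmx3E (A B : M) i j :
  (A *m B) i j = A i i0 * B i0 j + A i i1 * B i1 j + A i i2 * B i2 j.
Proof.
rewrite mxE !big_ord_recr big_ord0 /= add0r.
by congr (_ * _ + _ * _ + _ * _); congr (_ _ _); apply: val_inj;
  rewrite /= ?inord_val0 ?inord_val1 ?inord_val2.
Qed.

Lemma matrix3P (A B : M) :
  A i0 i0 = B i0 i0 -> A i0 i1 = B i0 i1 -> A i0 i2 = B i0 i2 ->
  A i1 i0 = B i1 i0 -> A i1 i1 = B i1 i1 -> A i1 i2 = B i1 i2 ->
  A i2 i0 = B i2 i0 -> A i2 i1 = B i2 i1 -> A i2 i2 = B i2 i2 -> A = B.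
Proof.
move=> h00 h01 h02 h10 h11 h12 h20 h21 h22; apply/matrixP => i j.
by case: (ord3P i) => ->; case: (ord3P j) => ->.
Qed.

Ltac entries :=
  rewrite ?(mulmx3E, mxE) ?inord_val0 ?inord_val1 ?inord_val2 /= ?mulr1n ?mulr0n.

Lemma is_S11P (A : M) : is_S11 A ->
  [/\ A i1 i0 = 0, A i2 i0 = 0, A i2 i1 = 0 & A i2 i2 = A i0 i0].
Proof. by case/and4P => /eqP -> /eqP -> /eqP -> /eqP ->. Qed.

Lemma is_S11I (A : M) : A i1 i0 = 0 -> A i2 i0 = 0 -> A i2 i1 = 0 ->
  A i0 i0 = A i2 i2 -> is_S11 A.
Proof. by move=> h10 h20 h21 h22; apply/and4P; rewrite h10 h20 h21 h22. Qed.

Lemma S11_mul (A B : M) : is_S11 A -> is_S11 B -> is_S11 (A *m B).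
Proof.
move=> /is_S11P [a10 a20 a21 a22] /is_S11P [b10 b20 b21 b22].
apply: is_S11I; entries; rewrite ?a10 ?a20 ?a21 ?a22 ?b10 ?b20 ?b21 ?b22; ring.
Qed.

Lemma S11_lin (A B : M) r s : is_S11 A -> is_S11 B -> is_S11 (r *: A + s *: B).
Proof.
move=> /is_S11P [a10 a20 a21 a22] /is_S11P [b10 b20 b21 b22].
apply: is_S11I; entries; rewrite ?a10 ?a20 ?a21 ?a22 ?b10 ?b20 ?b21 ?b22; ring.
Qed.

Definition E1133 : M := \matrix_(i, j)
  (((i == 0%N :> nat) && (j == 0%N :> nat)) || ((i == 2%N :> nat) && (j == 2%N :> nat)))%:R.
Definition E12 : M := \matrix_(i, j) ((i == 0%N :> nat) && (j == 1%N :> nat))%:R.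
Definition E22 : M := \matrix_(i, j) ((i == 1%N :> nat) && (j == 1%N :> nat))%:R.
Definition E23 : M := \matrix_(i, j) ((i == 1%N :> nat) && (j == 2%N :> nat))%:R.
Definition tau (x : M) : M := x i0 i1 *: E22 + x i0 i2 *: E23.
Definition delta (x : M) : M := E1133 *m x - chi x *: E1133.

Lemma S11_E1133 : is_S11 E1133. Proof. by apply: is_S11I; entries. Qed.
Lemma S11_E12 : is_S11 E12. Proof. by apply: is_S11I; entries. Qed.
Lemma S11_tau x : is_S11 (tau x). Proof. by apply: is_S11I; entries; ring. Qed.

Lemma S11_delta x : is_S11 x -> is_S11 (delta x).
Proof.
move=> hx; rewrite /delta -[_ *m _]scale1r -scaleNr.
by apply: S11_lin; [apply: S11_mul => //; apply: S11_E1133 | apply: S11_E1133].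
Qed.

Lemma chi_E1133 : chi E1133 = 1. Proof. by rewrite /chi; entries. Qed.
Lemma chi_E12 : chi E12 = 0. Proof. by rewrite /chi; entries. Qed.
Lemma chi_tau x : chi (tau x) = 0. Proof. by rewrite /chi /tau; entries; ring. Qed.

Lemma E1133_mul x : E1133 *m x = chi x *: E1133 + 1 *: delta x.
Proof. by rewrite /delta scale1r addrC subrK. Qed.

Lemma E12_tau x : is_S11 x -> E12 *m tau x = delta x.
Proof.
move=> /is_S11P [x10 x20 x21 x22]; rewrite /tau /delta /chi.
by apply: matrix3P; entries; rewrite ?x10 ?x20 ?x21 ?x22; ring.
Qed.

Lemma tau_mul x y : is_S11 x -> is_S11 y ->
  tau x *m y = 1 *: tau (x *m y) + (- chi x) *: tau y.
Proof.
move=> /is_S11P [x10 x20 x21 x22] /is_S11P [y10 y20 y21 y22]; rewrite /tau /chi.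
by apply: matrix3P; entries; rewrite ?x10 ?x20 ?x21 ?x22 ?y10 ?y20 ?y21 ?y22; ring.
Qed.

Lemma tau_lin r s a b : tau (r *: a + s *: b) = r *: tau a + s *: tau b.
Proof. by rewrite /tau; apply: matrix3P; entries; ring. Qed.

Lemma S11_scons s y : is_S11 s -> seq_in_S11 y -> seq_in_S11 (scons s y).
Proof. by move=> hs hy [|k]; [exact: hs | exact: hy]. Qed.

Lemma S11_tail (y : nat -> M) : seq_in_S11 y -> seq_in_S11 (fun k => y k.+1).
Proof. by move=> hy k; apply: hy. Qed.

Lemma insert_multilinear n s F :
  is_S11 s -> multilinear n.+1 F -> multilinear n (insert s F).
Proof.
move=> hs hF r t y i a b hi hy ha hb.
by rewrite /insert -!replace_at_scons_succ; apply: hF => //; apply: S11_scons.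
Qed.

Lemma twist_tau_multilinear n F : multilinear n.+1 F -> multilinear n.+1 (twist tau F).
Proof.
move=> hF r s y i a b hi hy ha hb.
have hty : seq_in_S11 (scons (tau (y 0%N)) (fun k => y k.+1)).
  by apply: S11_scons; [apply: S11_tau | apply: S11_tail].
case: i hi => [|i] hi.
  by rewrite !twist_replace_at0 tau_lin; apply: hF => //; apply: S11_tau.
by rewrite !twist_replace_at_succ; apply: hF.
Qed.

Lemma multilinearB n F G :
  multilinear n F -> multilinear n G -> multilinear n (fun y => F y - G y).
Proof.
by move=> hF hG r s y i a b hi hy ha hb; rewrite hF ?hG //; ring.
Qed.

Definition of_seq n (F : (nat -> M) -> R) : cochain_fun R n.+1 :=
  fun x => F (fun k => x (inord k)).
Arguments of_seq : clear implicits.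

Lemma on_seq_of_seq n F : depends_on n.+1 F -> on_seq (of_seq n F) = F.
Proof.
move=> hF; apply: functional_extensionality => y.
by apply: hF => k hk /=; rewrite inordK.
Qed.

Lemma of_seq_cochain n F :
  depends_on n.+1 F -> multilinear n.+1 F -> is_cochain (of_seq n F).
Proof.
move=> hdep hF x i a b r s hx ha hb.
have of_seq_upd v : of_seq n F (upd x i v) = F (replace_at i v (fun k => x (inord k))).
  by apply: hdep => k hk; rewrite /upd /replace_at -val_eqE /= inordK.
by rewrite !of_seq_upd; apply: hF => // k; apply: hx.
Qed.

Lemma cocycle_cone_E1133 n (f : cochain_fun R n.+1) y :
  is_cocycle f -> seq_in_S11 y ->
  dS n (insert E1133 (on_seq f)) y =
  on_seq f y - on_seq f (scons (delta (y 0%N)) (fun k => y k.+1)).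
Proof.
move=> hf hy; have hE := S11_scons S11_E1133 (S11_tail hy).
have := coboundary_scons mulmx chi n (on_seq f) E1133 y.
rewrite (cocycle_on_seq hf (S11_scons S11_E1133 hy)) add0r chi_E1133 mul1r => ->.
have := on_seq_multilinear hf.1 (chi (y 0%N)) 1 (ltn0Sn n) hE S11_E1133
  (S11_delta (hy 0%N)).
by rewrite !replace_at_scons0 -E1133_mul => ->; ring.
Qed.

Lemma cocycle_cone_E12 n (f : cochain_fun R n.+1) y :
  is_cocycle f -> seq_in_S11 y ->
  dS n (insert E12 (on_seq f)) (scons (tau (y 0%N)) (fun k => y k.+1)) =
  - on_seq f (scons (delta (y 0%N)) (fun k => y k.+1)).
Proof.
move=> hf hy; have hty := S11_scons (S11_tau (y 0%N)) (S11_tail hy).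
have := coboundary_scons mulmx chi n (on_seq f) E12 (scons (tau (y 0%N)) (fun k => y k.+1)).
rewrite (cocycle_on_seq hf (S11_scons S11_E12 hty)).
by rewrite /= chi_E12 chi_tau E12_tau // add0r => ->; ring.
Qed.

Lemma cocycle1_eq0 (f : cochain_fun R 1) x : is_cocycle f -> inS11n x -> f x = 0.
Proof.
move=> hf hx; set y := fun k => x (inord k).
have hy : seq_in_S11 y by move=> k; apply: hx.
have cone0 s z : dS 0 (insert s (on_seq f)) z = 0.
  rewrite /coboundary big_ord0 expr1.
  by rewrite (insert_depends s (on_seq_depends f) (y' := z)) //; ring.
have := cocycle_cone_E1133 hf hy; have := cocycle_cone_E12 hf hy.
rewrite !cone0 on_seq_inord => /eqP; rewrite eq_sym oppr_eq0 => /eqP ->.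
by rewrite subr0.
Qed.

Definition contraction (F : (nat -> M) -> R) : (nat -> M) -> R :=
  fun y => insert E1133 F y - twist tau (insert E12 F) y.

Lemma contraction_depends n F : depends_on n.+2 F -> depends_on n.+1 (contraction F).
Proof.
move=> hF y y' eq_y; rewrite /contraction.
by rewrite (insert_depends E1133 hF eq_y) (twist_depends tau (insert_depends E12 hF) eq_y).
Qed.

Lemma contraction_multilinear n F :
  multilinear n.+2 F -> multilinear n.+1 (contraction F).
Proof.
move=> hF; apply: multilinearB; first exact: insert_multilinear S11_E1133 hF.
exact/twist_tau_multilinear/insert_multilinear/hF/S11_E12.
Qed.

Lemma coboundary_contraction m (f : cochain_fun R m.+2) y :
  is_cocycle f -> seq_in_S11 y -> dS m.+1 (contraction (on_seq f)) y = on_seq f y.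
Proof.
move=> hf hy; have hy2 : seq_in_S11 (scons (tau (y 1%N)) (fun k => y k.+2)).
  by apply: S11_scons; [apply: S11_tau | move=> k; apply: hy].
rewrite /contraction coboundaryB (cocycle_cone_E1133 hf hy) coboundary_twist.
rewrite (cocycle_cone_E12 hf hy) chi_tau tau_mul //.
have := insert_multilinear S11_E12 (on_seq_multilinear hf.1) 1 (- chi (y 0%N))
  (ltn0Sn m) hy2 (S11_tau (y 0%N *m y 1%N)) (S11_tau (y 1%N)).
by rewrite !replace_at_scons0 => ->; rewrite /insert; ring.
Qed.

Lemma cochain0 (c : cochain_fun R 0) : is_cochain c.
Proof. by move=> x []. Qed.

Lemma cochain0_const (c : cochain_fun R 0) x x' : c x = c x'.
Proof. by congr c; apply: functional_extensionality => -[]. Qed.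

Lemma hdiff0 (c : cochain_fun R 0) x : hdiff c x = 0.
Proof.
rewrite /hdiff big_ord0 /lact /ract expr1 addr0 mulN1r mulrC.
by apply/eqP; rewrite subr_eq0 (cochain0_const c _ (fun j => x (inord j))).
Qed.

Lemma HH0_iso : HH_iso_R R 0.
Proof.
exists (fun r _ => r); split; [|split; [|split]].
- by move=> r; split; [exact: cochain0 | move=> x _; exact: hdiff0].
- by [].
- by move=> r /(_ (fun _ => 0)); apply => -[].
- move=> f _; exists (f (fun _ => 0)) => x _.
  by rewrite (cochain0_const f x (fun _ => 0)) subrr.
Qed.

Lemma HH_vanishes_pos n : (0 < n)%N -> HH_vanishes R n.
Proof.
case: n => [//|[|m]] _ f hf.
- exists (fun _ => 0); split; first exact: cochain0.
  by move=> x hx; rewrite (cocycle1_eq0 hf hx) hdiff0.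
- have hdep := contraction_depends (on_seq_depends f).
  exists (of_seq m (contraction (on_seq f))); split.
    exact/of_seq_cochain/contraction_multilinear/on_seq_multilinear/hf.1.
  move=> x hx; rewrite hdiff_on_seq on_seq_of_seq // coboundary_contraction //.
  by rewrite on_seq_inord.
Qed.

End S11Cohomology.

Theorem lemma5p7 (R : comRingType) :
  HH_iso_R R 0 /\ (forall n : nat, (0 < n)%N -> HH_vanishes R n).
Proof. by split; [exact: HH0_iso | exact: HH_vanishes_pos]. Qed.
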